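(* Let $m\ge 1$, $n\ge 1$, and for each $i\in\{1,\dots,m\}$ let $f_i:\mathbb{R}^n\to\mathbb{R}$ be differentiable, with $\nabla f_i$ being $s_i$-Lipschitz for some $s_i>0$, and $f_i$ being $c_i$-strongly convex for some $c_i>0$, i.e. $(\nabla f_i(x)-\nabla f_i(y))^{\top}(x-y)\ge c_i\|x-y\|^2$ for all $x,y\in\mathbb{R}^n$. Let $\alpha_i>0$ with $\sum_{i=1}^m\alpha_i=1$, let $\beta_i>0$, let $\delta>0$, and let $\sigma_i$ satisfy $$0<\sigma_i<\frac{\sqrt{2c_i}}{\sqrt{2c_i}+\sqrt{\beta_i}}.$$ Let $z^*$ be the unique minimizer of $\sum_{i=1}^m\alpha_i f_i(z)$ over $z\in\mathbb{R}^n$, and set $u_i^*=z^*$ and $\lambda_i^*=\nabla f_i(z^* )$ for all $i$. Given initial points $u_i^0,\lambda_i^0\in\mathbb{R}^n$ ($i\in[m]$) and $z^0\in\mathbb{R}^n$, let the sequence $\{(u^k,\lambda^k,z^k)\}_{k\ge0}$ be generated as follows: for $k\ge 0$ and every $i\in[m]$, 1. $u_i^{k+1}\in\mathbb{R}^n$ is any point satisfying the inexactness criterion $\|e_i^k(u_i^{k+1})\|\le\sigma_i\|e_i^k(u_i^k)\|$, where $e_i^k(u_i)=\nabla f_i(u_i)-\lambda_i^k+\beta_i(u_i-z^k)$; 2. $\lambda_i^{k+1}=\lambda_i^k-\beta_i(u_i^{k+1}-z^k)$; 3. $z^{k+1}=\frac{1}{1+\delta}\hat z^{k+1}+\frac{\delta}{1+\delta}z^k$,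 where $\hat z^{k+1}=\frac{1}{\sum_{i=1}^m\alpha_i\beta_i}\sum_{i=1}^m\alpha_i(\beta_iu_i^{k+1}-\lambda_i^{k+1})$ (equivalently, $z^{k+1}$ minimizes $\sum_{i=1}^m\alpha_i\big(f_i(u_i^{k+1})-(\lambda_i^{k+1})^{\top}(u_i^{k+1}-z)+\frac{\beta_i}{2}\|u_i^{k+1}-z\|^2\big)+\frac{\delta}{2}\sum_{i=1}^m\alpha_i\beta_i\|z-z^k\|^2$ over $z\in\mathbb{R}^n$). Then for every $i\in[m]$, as $k\to\infty$: $\|e_i^k(u_i^{k+1})\|\to0$, $u_i^k\to u_i^*$, $\lambda_i^k\to\lambda_i^*$, and $z^k\to z^*$.
   Context: This is the convergence of the inexact federated ADMM (all clients participate in every round) applied to $\min_{u_i,z}\sum_i\alpha_if_i(u_i)$ subject to $u_i=z$ for all $i$, whose augmented Lagrangian is $L_{\alpha,\beta}(u,\lambda,z)=\sum_{i=1}^m\alpha_i\big(f_i(u_i)-\lambda_i^{\top}(u_i-z)+\frac{\beta_i}{2}\|u_i-z\|^2\big)$. The point $(u^*,\lambda^*,z^* )$ is the unique primal–dual solution of this constrained problem. $\|\cdot\|$ is the Euclidean norm and $[m]=\{1,\dots,m\}$. *)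

From HB Require Import structures.
From mathcomp Require Import all_boot all_order all_algebra.
From mathcomp Require Import all_classical all_reals all_analysis.
Set Implicit Arguments. Unset Strict Implicit. Unset Printing Implicit Defensive.
Import Order.TTheory GRing.Theory Num.Theory.
Import numFieldNormedType.Exports.
Local Open Scope ring_scope.

Definition dotv {R : realType} {n : nat} (u v : 'rV[R]_n) : R :=
  \sum_(j < n) u 0 j * v 0 j.

Definition enorm {R : realType} {n : nat} (v : 'rV[R]_n) : R :=
  Num.sqrt (dotv v v).

Definition is_gradient {R : realType} {n : nat}
  (f : 'rV[R]_n -> R) (g : 'rV[R]_n -> 'rV[R]_n) : Prop :=
  forall x : 'rV[R]_n, differentiable f x /\ forall h, 'd f x h = dotv (g x) h.

From HB Require Import structures.
From mathcomp Require Import all_boot all_order all_algebra.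
From mathcomp Require Import all_classical all_reals all_analysis.
From mathcomp Require Import ring lra.
Import Order.TTheory GRing.Theory Num.Theory.
Import numFieldNormedType.Exports.
Local Open Scope classical_set_scope.
Local Open Scope ring_scope.

(* Lyapunov argument.  Write lam* = grad f_i(z* ) and B = sum_i alpha_i beta_i.
   Because the z-step balances the dual step and sum_i alpha_i lam*_i = 0, the
   classical ADMM energy
     V_k = sum_i alpha_i / beta_i |lam_i^k - lam*_i + beta_i (z^k - z* )|^2
           + delta B |z^k - z* |^2
   drops by exactly 2 sum_i alpha_i <u_i^(k+1) - z*, lam_i^(k+1) - lam*_i> plus
   nonnegative terms.  Strong monotonicity, the inexactness criterion and two
   Young inequalities with a parameter q_i, chosen in the window left open by
   the bound on sigma_i, turn this cross term into a descent once V_k is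
   augmented by the local errors q_i / beta_i |grad f_i(u_i^k) - lam_i^k|^2
   + beta_i |u_i^k - z^k|^2.  The augmented energy is nonnegative and its
   decrements dominate |u_i^(k+1) - z* |^2 and both local errors, which hence
   tend to 0; the other limits follow by the Lipschitz bound on grad f_i. *)

Section RowVectors.
Context {R : realType} {n : nat}.
Implicit Types (u v w : 'rV[R]_n).

Definition sqnorm v := dotv v v.

Lemma sqnorm_ge0 v : 0 <= sqnorm v.
Proof. by apply: sumr_ge0 => j _; rewrite -expr2 sqr_ge0. Qed.

Lemma sqnorm_eq0 v : sqnorm v = 0 -> v = 0.
Proof.
move=> v0; apply/rowP => j; rewrite mxE; apply/eqP; rewrite -sqrf_eq0.
by apply/eqP/(psumr_eq0P _ v0) => // k _; rewrite -expr2 sqr_ge0.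
Qed.

Lemma enorm_ge0 v : 0 <= enorm v.
Proof. exact: sqrtr_ge0. Qed.

Lemma enorm_sqr v : enorm v ^+ 2 = sqnorm v.
Proof. by rewrite sqr_sqrtr // sqnorm_ge0. Qed.

Lemma dotvC u v : dotv u v = dotv v u.
Proof. by apply: eq_bigr => j _; rewrite mulrC. Qed.

Lemma dotvZr a u v : dotv u (a *: v) = a * dotv u v.
Proof. by rewrite /dotv mulr_sumr; apply: eq_bigr => j _; rewrite mxE mulrCA. Qed.

Lemma dotvNr u v : dotv u (- v) = - dotv u v.
Proof. by rewrite -scaleN1r dotvZr mulN1r. Qed.

Lemma dotvBr u v w : dotv u (v - w) = dotv u v - dotv u w.
Proof. by rewrite /dotv -sumrB; apply: eq_bigr => j _; rewrite !mxE mulrBr. Qed.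

Lemma dotv_sumr m u (v : 'I_m -> 'rV[R]_n) :
  \sum_(i < m) dotv u (v i) = dotv u (\sum_(i < m) v i).
Proof.
rewrite /dotv exchange_big; apply: eq_bigr => j _.
by rewrite summxE mulr_sumr.
Qed.

Lemma sqnormZ a v : sqnorm (a *: v) = a ^+ 2 * sqnorm v.
Proof. by rewrite /sqnorm dotvZr dotvC dotvZr mulrA -expr2. Qed.

Lemma sqnormD u v : sqnorm (u + v) = sqnorm u + 2 * dotv u v + sqnorm v.
Proof.
rewrite /sqnorm /dotv mulr_sumr -!big_split /=.
by apply: eq_bigr => j _; rewrite !mxE; ring.
Qed.

Lemma dotv_young u v (eta : R) : 0 < eta ->
  2 * dotv u v <= eta * sqnorm u + eta^-1 * sqnorm v.
Proof.
move=> eta_gt0; rewrite /sqnorm /dotv !mulr_sumr -big_split /=.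
apply: ler_sum => j _; rewrite -subr_ge0.
have -> : eta * (u 0 j * u 0 j) + eta^-1 * (v 0 j * v 0 j) - 2 * (u 0 j * v 0 j)
    = eta^-1 * (eta * u 0 j - v 0 j) ^+ 2 by field; rewrite gt_eqF.
by rewrite mulr_ge0 ?sqr_ge0 // invr_ge0 ltW.
Qed.

Lemma sqnormD_young u v (eta : R) : 0 < eta ->
  sqnorm (u + v) <= (1 + eta) * sqnorm u + (1 + eta^-1) * sqnorm v.
Proof. by move=> /(dotv_young u v); rewrite sqnormD; lra. Qed.

Lemma sqnormB_le u v : sqnorm (u - v) <= 2 * sqnorm u + 2 * sqnorm v.
Proof.
have := sqnormD_young u (- v) 1 ltr01.
by rewrite -scaleN1r sqnormZ sqrrN expr1n mul1r invr1.
Qed.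

(* With [mu i] standing for lam_i^(k+1) - lam*_i, the dual update rewrites
   lam_i^k - lam*_i + beta_i (z^k - z* ) as [mu i + be i *: (u' i - zs)]. *)
Lemma lyapunov_identity {m} {al be : 'I_m -> R} {dl : R}
    {mu u' : 'I_m -> 'rV[R]_n} {z z' : 'rV[R]_n} (zs : 'rV[R]_n) :
  (forall i, be i != 0) ->
  \sum_i al i *: (be i *: (u' i - z') - mu i) =
    (dl * \sum_i al i * be i) *: (z' - z) ->
  \sum_i al i / be i * sqnorm (mu i + be i *: (u' i - zs))
    + dl * (\sum_i al i * be i) * sqnorm (z - zs) =
  \sum_i al i / be i * sqnorm (mu i + be i *: (z' - zs))
    + dl * (\sum_i al i * be i) * sqnorm (z' - zs)
  + 2 * \sum_i al i * dotv (u' i - zs) (mu i)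
  + \sum_i al i * be i * sqnorm (u' i - z')
  + dl * (\sum_i al i * be i) * sqnorm (z' - z).
Proof.
move=> be_neq0 balance.
have termE i : al i / be i * sqnorm (mu i + be i *: (u' i - zs)) =
    al i / be i * sqnorm (mu i + be i *: (z' - zs))
    + 2 * (al i * dotv (u' i - zs) (mu i))
    + al i * be i * sqnorm (u' i - z')
    + 2 * dotv (z' - zs) (al i *: (be i *: (u' i - z') - mu i)).
  rewrite /sqnorm /dotv !mulr_sumr -!big_split /=.
  by apply: eq_bigr => j _; rewrite !mxE; field; exact: be_neq0.
have centerE : sqnorm (z - zs) =
    sqnorm (z' - zs) + sqnorm (z' - z) - 2 * dotv (z' - zs) (z' - z).
  rewrite /sqnorm /dotv mulr_sumr -big_split -sumrB /=.
  by apply: eq_bigr => j _; rewrite !mxE; ring.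
rewrite (eq_bigr _ (fun i _ => termE i)) !big_split /= -!mulr_sumr.
by rewrite dotv_sumr balance dotvZr centerE; ring.
Qed.

Lemma inexact_step_bound {bt c sg q : R}
    {gu gu' gzs lam lam' u u' z zs : 'rV[R]_n} :
  0 < bt -> 0 < q -> 0 <= sg ->
  lam' = lam - bt *: (u' - z) ->
  enorm (gu' - lam + bt *: (u' - z)) <= sg * enorm (gu - lam + bt *: (u - z)) ->
  c * enorm (u' - zs) ^+ 2 <= dotv (gu' - gzs) (u' - zs) ->
  q / bt * sqnorm (gu' - lam') - 2 * dotv (u' - zs) (lam' - gzs) <=
  sg ^+ 2 * (1 + q) ^+ 2 * (q / bt * sqnorm (gu - lam) + bt * sqnorm (u - z))
  - (2 * c - bt / q ^+ 2) * sqnorm (u' - zs).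
Proof.
move=> bt_gt0 q_gt0 sg_ge0 lam'E crit mono.
have residE : gu' - lam' = gu' - lam + bt *: (u' - z).
  by rewrite lam'E opprB addrA addrAC.
have resid_le :
    sqnorm (gu' - lam') <= sg ^+ 2 * sqnorm (gu - lam + bt *: (u - z)).
  rewrite residE -!enorm_sqr -exprMn.
  by apply: lerXn2r; rewrite ?nnegrE ?mulr_ge0 ?enorm_ge0.
have := sqnormD_young (gu - lam) (bt *: (u - z)) q q_gt0.
rewrite sqnormZ => old_split.
have scaled_resid_le : (q + q ^+ 2) / bt * sqnorm (gu' - lam') <=
    sg ^+ 2 * (1 + q) ^+ 2 * (q / bt * sqnorm (gu - lam) + bt * sqnorm (u - z)).
  have -> : sg ^+ 2 * (1 + q) ^+ 2 *
        (q / bt * sqnorm (gu - lam) + bt * sqnorm (u - z))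
      = (q + q ^+ 2) / bt * (sg ^+ 2 * ((1 + q) * sqnorm (gu - lam)
                                  + (1 + q^-1) * (bt ^+ 2 * sqnorm (u - z)))).
    by field; rewrite !gt_eqF.
  rewrite ler_pM2l ?divr_gt0 ?addr_gt0 ?exprn_gt0 //.
  exact: le_trans resid_le (ler_wpM2l (sqr_ge0 sg) old_split).
have dotE : dotv (u' - zs) (lam' - gzs) =
    dotv (u' - zs) (gu' - gzs) - dotv (u' - zs) (gu' - lam').
  by rewrite -dotvBr; congr dotv; rewrite opprB [RHS]addrC subrKA.
have := dotv_young (u' - zs) (gu' - lam') (bt / q ^+ 2)
  (divr_gt0 bt_gt0 (exprn_gt0 2 q_gt0)).
rewrite invf_div dotE => young.
rewrite enorm_sqr dotvC in mono.
have : (q + q ^+ 2) / bt * sqnorm (gu' - lam') =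
  q / bt * sqnorm (gu' - lam') + q ^+ 2 / bt * sqnorm (gu' - lam') by ring.
lra.
Qed.

End RowVectors.

Section Stationarity.
Context {R : realType}.

Lemma derive_ge0_at_min (V : normedModType R) (F : V -> R) x v :
  (forall y, F x <= F y) -> derivable F x v -> 0 <= 'D_v F x.
Proof.
move=> xmin dF.
have right_quot :
    (fun t : R => t^-1 *: ((F \o shift x) (t *: v) - F x)) @ 0^'+ --> 'D_v F x.
  by apply: cvg_trans dF; apply: cvg_app; apply: within_subset => t /lt0r_neq0.
rewrite -(cvg_lim _ right_quot) //; apply: limr_ge; first exact/cvgP/right_quot.
near=> t; have t_gt0 : 0 < t by near: t; exact: nbhs_right_gt.
by apply: mulr_ge0; [rewrite invr_ge0 ltW | rewrite subr_ge0 xmin].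
Unshelve. all: by end_near.
Qed.

Context {n : nat}.

Lemma gradient_eq0_at_min {F : 'rV[R]_n -> R} {G : 'rV[R]_n -> 'rV[R]_n} {x} :
  is_gradient F G -> (forall y, F x <= F y) -> G x = 0.
Proof.
move=> /(_ x) [dF dFE] xmin.
have : 0 <= dotv (G x) (- G x).
  rewrite -dFE -deriveE //; apply: derive_ge0_at_min xmin _.
  exact: diff_derivable.
rewrite dotvNr oppr_ge0 => sqG_le0.
by apply: sqnorm_eq0; apply/eqP; rewrite eq_le sqG_le0 sqnorm_ge0.
Qed.

Lemma is_gradient_wsum {m} (a : 'I_m -> R) {f : 'I_m -> 'rV[R]_n -> R}
    {g : 'I_m -> 'rV[R]_n -> 'rV[R]_n} :
  (forall i, is_gradient (f i) (g i)) ->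
  is_gradient (fun x => \sum_i a i * f i x) (fun x => \sum_i a i *: g i x).
Proof.
move=> grad x.
have dfi i : differentiable (f i) x by have [] := grad i x.
have -> : (fun y => \sum_i a i * f i y) = \sum_i (a i \*: f i).
  by rewrite fct_sumE.
split; first by apply: differentiable_sum => i; exact: differentiableZ.
move=> h; rewrite -deriveE; last first.
  by apply: differentiable_sum => i; exact: differentiableZ.
rewrite derive_sum => [|i]; last exact/derivableZ/diff_derivable.
rewrite dotvC -dotv_sumr; apply: eq_bigr => i _.
rewrite deriveZ; last exact: diff_derivable.
by rewrite deriveE // (grad i x).2 dotvZr dotvC.
Qed.

End Stationarity.

Section Sequences.
Context {R : realType}.
Implicit Types (W D x y : nat -> R).

Lemma descent_cvg0 {W D} : (forall k, 0 <= W k) -> (forall k, 0 <= D k) ->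
  (forall k, W k.+1 <= W k - D k) -> D @ \oo --> 0.
Proof.
move=> W_ge0 D_ge0 descent.
have W_noninc : nonincreasing_seq W.
  apply/nonincreasing_seqP => k.
  by rewrite (le_trans (descent k)) // gerDl oppr_le0.
have cvgW : cvgn W.
  by apply: nonincreasing_is_cvgn => //; exists 0 => _ [k _ <-].
have cvgWS : (fun k => W k.+1) @ \oo --> limn W by rewrite (cvg_shiftS W).
have gap0 : (fun k => W k - W k.+1) @ \oo --> 0.
  by rewrite -(subrr (limn W)); exact: cvgB cvgW cvgWS.
apply: (squeeze_cvgr _ (cvg_cst 0) gap0).
by near=> k; rewrite D_ge0 /= lerBrDr -lerBrDl.
Unshelve. all: by end_near.
Qed.

Lemma cvg0_dominated {x y} {K : R} : 0 < K -> (forall k, 0 <= x k) ->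
  (forall k, K * x k <= y k) -> y @ \oo --> 0 -> x @ \oo --> 0.
Proof.
move=> K_gt0 x_ge0 x_le y0.
have Ky0 : (fun k => K^-1 * y k) @ \oo --> 0.
  by rewrite -(mulr0 K^-1); exact: cvgMl_tmp.
apply: (squeeze_cvgr _ (cvg_cst 0) Ky0).
by near=> k; rewrite x_ge0 /= ler_pdivlMl.
Unshelve. all: by end_near.
Qed.

Context {n : nat}.
Implicit Types (v w : nat -> 'rV[R]_n).

Lemma enorm_cvg0 v : (fun k => sqnorm (v k)) @ \oo --> 0 ->
  (fun k => enorm (v k)) @ \oo --> 0.
Proof.
by move=> v0; rewrite -sqrtr0; apply: continuous_cvg v0; exact: sqrt_continuous.
Qed.

Lemma sqnormB_cvg0 v w : (fun k => sqnorm (v k)) @ \oo --> 0 ->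
  (fun k => sqnorm (w k)) @ \oo --> 0 ->
  (fun k => sqnorm (v k - w k)) @ \oo --> 0.
Proof.
move=> v0 w0.
apply: (cvg0_dominated (y := fun k => 2 * sqnorm (v k) + 2 * sqnorm (w k)) ltr01).
- by move=> k; exact: sqnorm_ge0.
- by move=> k; rewrite mul1r sqnormB_le.
- rewrite -(addr0 0) -(mulr0 2).
  by apply: cvgD; exact: cvgMl_tmp.
Qed.

End Sequences.

Lemma young_parameter {R : realType} {c bt sg : R} : 0 < c -> 0 < bt -> 0 < sg ->
  sg < Num.sqrt (2 * c) / (Num.sqrt (2 * c) + Num.sqrt bt) ->
  exists q, [/\ 0 < q, sg ^+ 2 * (1 + q) ^+ 2 < 1 & bt / q ^+ 2 < 2 * c].
Proof.
move=> c_gt0 bt_gt0 sg_gt0.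
set S := Num.sqrt (2 * c); set T := Num.sqrt bt.
have S_gt0 : 0 < S by rewrite sqrtr_gt0 mulr_gt0.
have T_gt0 : 0 < T by rewrite sqrtr_gt0.
rewrite ltr_pdivlMr ?addr_gt0 // mulrDr => sg_small.
(* q must lie in ]T / S, (1 - sg) / sg[: the left end gives
   [bt / q ^+ 2 < 2 * c], the right end [sg * (1 + q) < 1]; the hypothesis
   on sg makes the window nonempty. *)
have lo_gt0 : 0 < T / S by rewrite divr_gt0.
have lo_hi : T / S < (1 - sg) / sg.
  by rewrite ltr_pdivrMr // mulrAC ltr_pdivlMr // mulrBl mul1r; lra.
exists ((T / S + (1 - sg) / sg) / 2); set q := _ / 2.
have lo_q : T / S < q by rewrite /q; lra.
have q_hi : q < (1 - sg) / sg by rewrite /q; lra.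
have q_gt0 : 0 < q by lra.
split=> //.
  have sgq : sg * q < 1 - sg by rewrite mulrC -ltr_pdivlMr.
  rewrite -exprMn expr_lt1 ?mulr_ge0 ?addr_ge0 ?ltW //.
  by rewrite mulrDr mulr1; lra.
have btE : bt = (T / S) ^+ 2 * (2 * c).
  by rewrite expr_div_n !sqr_sqrtr ?mulr_ge0 ?ltW // divfK // gt_eqF ?mulr_gt0.
rewrite ltr_pdivrMr ?exprn_gt0 // btE mulrC ltr_pM2l ?mulr_gt0 //.
by rewrite ltr_pXn2r ?nnegrE ?ltW.
Qed.

Section InexactADMM.
Context {R : realType} {m n : nat}.
Context {g : 'I_m -> 'rV[R]_n -> 'rV[R]_n} {s c alpha beta sigma q : 'I_m -> R}.
Context {delta : R} {zstar : 'rV[R]_n}.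
Context {u lam : nat -> 'I_m -> 'rV[R]_n} {z : nat -> 'rV[R]_n}.

Hypothesis m_gt0 : (0 < m)%N.
Hypothesis g_lipschitz :
  forall i x y, enorm (g i x - g i y) <= s i * enorm (x - y).
Hypothesis g_strongly_monotone :
  forall i x y, c i * enorm (x - y) ^+ 2 <= dotv (g i x - g i y) (x - y).
Hypothesis alpha_gt0 : forall i, 0 < alpha i.
Hypothesis beta_gt0 : forall i, 0 < beta i.
Hypothesis delta_gt0 : 0 < delta.
Hypothesis sigma_gt0 : forall i, 0 < sigma i.
Hypothesis q_admissible : forall i,
  [/\ 0 < q i, sigma i ^+ 2 * (1 + q i) ^+ 2 < 1 & beta i / q i ^+ 2 < 2 * c i].
Hypothesis stationary : \sum_i alpha i *: g i zstar = 0.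
Hypothesis inexact : forall k i,
  enorm (g i (u k.+1 i) - lam k i + beta i *: (u k.+1 i - z k))
  <= sigma i * enorm (g i (u k i) - lam k i + beta i *: (u k i - z k)).
Hypothesis lam_update :
  forall k i, lam k.+1 i = lam k i - beta i *: (u k.+1 i - z k).
Hypothesis z_update : forall k, z k.+1 =
  (1 + delta)^-1 *: ((\sum_i alpha i * beta i)^-1 *:
     \sum_i alpha i *: (beta i *: u k.+1 i - lam k.+1 i))
  + (delta / (1 + delta)) *: z k.

Let q_gt0 i : 0 < q i. Proof. by case: (q_admissible i). Qed.
Let q_contraction i : sigma i ^+ 2 * (1 + q i) ^+ 2 < 1.
Proof. by case: (q_admissible i). Qed.
Let q_strong i : beta i / q i ^+ 2 < 2 * c i.
Proof. by case: (q_admissible i). Qed.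

Local Notation B := (\sum_(i < m) alpha i * beta i).

Definition local_error k i :=
  q i / beta i * sqnorm (g i (u k i) - lam k i) + beta i * sqnorm (u k i - z k).

Definition lyapunov k :=
  \sum_i alpha i / beta i * sqnorm (lam k i - g i zstar + beta i *: (z k - zstar))
  + delta * B * sqnorm (z k - zstar).

Definition merit k := lyapunov k + \sum_i alpha i * local_error k i.

Definition decrement k := \sum_i alpha i *
  ((2 * c i - beta i / q i ^+ 2) * sqnorm (u k.+1 i - zstar)
   + (1 - sigma i ^+ 2 * (1 + q i) ^+ 2) * local_error k i).

Lemma B_gt0 : 0 < B.
Proof.
rewrite (bigD1 (Ordinal m_gt0)) //= ltr_pwDl ?mulr_gt0 //.
by rewrite sumr_ge0 // => i _; rewrite mulr_ge0 ?ltW.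
Qed.

Lemma z_update_balance k :
  \sum_i alpha i *: (beta i *: (u k.+1 i - z k.+1) - (lam k.+1 i - g i zstar))
  = (delta * B) *: (z k.+1 - z k).
Proof.
have S_eq : \sum_i alpha i *: (beta i *: u k.+1 i - lam k.+1 i) =
    B *: z k.+1 + (delta * B) *: (z k.+1 - z k).
  apply/rowP => j; rewrite z_update !mxE.
  by field; rewrite (gt_eqF B_gt0) gt_eqF ?addr_gt0.
have termE i :
    alpha i *: (beta i *: (u k.+1 i - z k.+1) - (lam k.+1 i - g i zstar)) =
    alpha i *: (beta i *: u k.+1 i - lam k.+1 i) - (alpha i * beta i) *: z k.+1
    + alpha i *: g i zstar.
  by apply/rowP => j; rewrite !mxE; ring.
rewrite (eq_bigr _ (fun i _ => termE i)) big_split sumrB /= -scaler_suml.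
by rewrite stationary addr0 S_eq addrAC subrr add0r.
Qed.

Lemma lyapunov_step k :
  lyapunov k = lyapunov k.+1
  + 2 * \sum_i alpha i * dotv (u k.+1 i - zstar) (lam k.+1 i - g i zstar)
  + \sum_i alpha i * beta i * sqnorm (u k.+1 i - z k.+1)
  + delta * B * sqnorm (z k.+1 - z k).
Proof.
have shiftE i : lam k i - g i zstar + beta i *: (z k - zstar) =
    lam k.+1 i - g i zstar + beta i *: (u k.+1 i - zstar).
  by rewrite lam_update; apply/rowP => j; rewrite !mxE; ring.
rewrite /lyapunov (eq_bigr _ (fun i _ =>
  congr1 (fun v => alpha i / beta i * sqnorm v) (shiftE i))).
exact: lyapunov_identity zstar (fun i => lt0r_neq0 (beta_gt0 i))
  (z_update_balance k).
Qed.

Lemma local_error_ge0 k i : 0 <= local_error k i.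
Proof. by rewrite addr_ge0 // mulr_ge0 ?sqnorm_ge0 ?divr_ge0 ?ltW. Qed.

Lemma decrement_term_ge0 k i :
  0 <= (2 * c i - beta i / q i ^+ 2) * sqnorm (u k.+1 i - zstar)
       + (1 - sigma i ^+ 2 * (1 + q i) ^+ 2) * local_error k i.
Proof.
by rewrite addr_ge0 // mulr_ge0 ?sqnorm_ge0 ?local_error_ge0 // subr_ge0 ltW.
Qed.

Lemma decrement_ge0 k : 0 <= decrement k.
Proof.
by rewrite sumr_ge0 // => i _; rewrite mulr_ge0 ?decrement_term_ge0 ?ltW.
Qed.

Lemma merit_ge0 k : 0 <= merit k.
Proof.
rewrite /merit /lyapunov; apply: addr_ge0; first apply: addr_ge0.
- by apply: sumr_ge0 => i _; rewrite mulr_ge0 ?sqnorm_ge0 ?divr_ge0 ?ltW.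
- by rewrite mulr_ge0 ?sqnorm_ge0 // mulr_ge0 ?ltW ?B_gt0.
- by apply: sumr_ge0 => i _; rewrite mulr_ge0 ?local_error_ge0 ?ltW.
Qed.

Lemma merit_decrease k : merit k.+1 <= merit k - decrement k.
Proof.
have local_step i :
    q i / beta i * sqnorm (g i (u k.+1 i) - lam k.+1 i)
    - 2 * dotv (u k.+1 i - zstar) (lam k.+1 i - g i zstar)
  <= sigma i ^+ 2 * (1 + q i) ^+ 2 * local_error k i
    - (2 * c i - beta i / q i ^+ 2) * sqnorm (u k.+1 i - zstar).
  exact: inexact_step_bound (beta_gt0 i) (q_gt0 i) (ltW (sigma_gt0 i))
    (lam_update k i) (inexact k i) (g_strongly_monotone _ _ _).
have summed : \sum_i alpha i * local_error k.+1 i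
    - 2 * \sum_i alpha i * dotv (u k.+1 i - zstar) (lam k.+1 i - g i zstar)
    - \sum_i alpha i * beta i * sqnorm (u k.+1 i - z k.+1)
  <= \sum_i alpha i * local_error k i - decrement k.
  rewrite /decrement [2 * _]mulr_sumr -!sumrB; apply: ler_sum => i _.
  have := ler_wpM2l (ltW (alpha_gt0 i)) (local_step i); rewrite /local_error; lra.
have dz_ge0 : 0 <= delta * B * sqnorm (z k.+1 - z k).
  by rewrite mulr_ge0 ?sqnorm_ge0 // mulr_ge0 ?ltW ?B_gt0.
rewrite /merit (lyapunov_step k); lra.
Qed.

Lemma local_terms_cvg0 i : [/\
  (fun k => sqnorm (u k.+1 i - zstar)) @ \oo --> 0,
  (fun k => sqnorm (g i (u k i) - lam k i)) @ \oo --> 0 &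
  (fun k => sqnorm (u k i - z k)) @ \oo --> 0].
Proof.
have decrement0 := descent_cvg0 merit_ge0 decrement_ge0 merit_decrease.
have term_le k : alpha i *
    ((2 * c i - beta i / q i ^+ 2) * sqnorm (u k.+1 i - zstar)
     + (1 - sigma i ^+ 2 * (1 + q i) ^+ 2) * local_error k i) <= decrement k.
  rewrite /decrement (bigD1 i) //= lerDl sumr_ge0 // => j _.
  by rewrite mulr_ge0 ?decrement_term_ge0 ?ltW.
have strong_gt0 : 0 < 2 * c i - beta i / q i ^+ 2 by rewrite subr_gt0.
have contr_gt0 : 0 < 1 - sigma i ^+ 2 * (1 + q i) ^+ 2 by rewrite subr_gt0.
have local_le k : alpha i * (1 - sigma i ^+ 2 * (1 + q i) ^+ 2) * local_error k i
    <= decrement k.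
  apply: le_trans (term_le k); rewrite -mulrA ler_pM2l // lerDr.
  by rewrite mulr_ge0 ?sqnorm_ge0 ?ltW.
split.
- apply: (cvg0_dominated (K := alpha i * (2 * c i - beta i / q i ^+ 2))
    (mulr_gt0 (alpha_gt0 i) strong_gt0) (fun k => sqnorm_ge0 _) _ decrement0).
  move=> k; apply: le_trans (term_le k); rewrite -mulrA ler_pM2l // lerDl.
  by rewrite mulr_ge0 ?local_error_ge0 ?ltW.
- apply: (cvg0_dominated
    (K := alpha i * (1 - sigma i ^+ 2 * (1 + q i) ^+ 2) * (q i / beta i))
    _ (fun k => sqnorm_ge0 _) _ decrement0).
    by rewrite !mulr_gt0 ?invr_gt0.
  move=> k; apply: le_trans (local_le k); rewrite -mulrA ler_pM2l ?mulr_gt0 //.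
  by rewrite lerDl mulr_ge0 ?sqnorm_ge0 ?ltW.
- apply: (cvg0_dominated
    (K := alpha i * (1 - sigma i ^+ 2 * (1 + q i) ^+ 2) * beta i)
    _ (fun k => sqnorm_ge0 _) _ decrement0).
    by rewrite !mulr_gt0.
  move=> k; apply: le_trans (local_le k); rewrite -mulrA ler_pM2l ?mulr_gt0 //.
  by rewrite lerDr mulr_ge0 ?sqnorm_ge0 ?divr_ge0 ?ltW.
Qed.

Lemma inexact_admm_cvg i :
  (fun k => enorm (g i (u k.+1 i) - lam k i + beta i *: (u k.+1 i - z k)))
    @ \oo --> 0 /\
  (fun k => enorm (u k i - zstar)) @ \oo --> 0 /\
  (fun k => enorm (lam k i - g i zstar)) @ \oo --> 0 /\
  (fun k => enorm (z k - zstar)) @ \oo --> 0.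
Proof.
have [uS0 resid0 gap0] := local_terms_cvg0 i.
have u0 : (fun k => sqnorm (u k i - zstar)) @ \oo --> 0.
  by rewrite -(cvg_shiftS (fun k => sqnorm (u k i - zstar))).
have grad0 : (fun k => sqnorm (g i (u k i) - g i zstar)) @ \oo --> 0.
  apply: (cvg0_dominated (y := fun k => s i ^+ 2 * sqnorm (u k i - zstar)) ltr01).
  - by move=> k; exact: sqnorm_ge0.
  - move=> k; have lip := g_lipschitz i (u k i) zstar.
    rewrite mul1r -!enorm_sqr -exprMn; apply: lerXn2r => //.
      by rewrite nnegrE enorm_ge0.
    by rewrite nnegrE (le_trans (enorm_ge0 _) lip).
  - by rewrite -(mulr0 (s i ^+ 2)); exact: cvgMl_tmp.
split; [|split; [|split]]; apply: enorm_cvg0.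
- have -> : (fun k =>
        sqnorm (g i (u k.+1 i) - lam k i + beta i *: (u k.+1 i - z k)))
      = (fun k => sqnorm (g i (u k.+1 i) - lam k.+1 i)).
    by apply/funext => k; rewrite lam_update opprB addrA addrAC.
  by rewrite (cvg_shiftS (fun k => sqnorm (g i (u k i) - lam k i))).
- exact: u0.
- have -> : (fun k => sqnorm (lam k i - g i zstar))
      = (fun k => sqnorm ((g i (u k i) - g i zstar) - (g i (u k i) - lam k i))).
    by apply/funext => k; rewrite opprB [in RHS]addrC subrKA.
  exact: sqnormB_cvg0.
- have -> : (fun k => sqnorm (z k - zstar))
      = (fun k => sqnorm ((u k i - zstar) - (u k i - z k))).
    by apply/funext => k; rewrite opprB [in RHS]addrC subrKA.
  exact: sqnormB_cvg0.
Qed.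

End InexactADMM.

Theorem theorem1 (R : realType) (m n : nat)
  (f : 'I_m -> 'rV[R]_n -> R) (g : 'I_m -> 'rV[R]_n -> 'rV[R]_n)
  (s c alpha beta sigma : 'I_m -> R) (delta : R)
  (zstar : 'rV[R]_n)
  (u lam : nat -> 'I_m -> 'rV[R]_n) (z : nat -> 'rV[R]_n) :
  (0 < m)%N -> (0 < n)%N ->
  (forall i, is_gradient (f i) (g i)) ->
  (forall i, 0 < s i) ->
  (forall i x y, enorm (g i x - g i y) <= s i * enorm (x - y)) ->
  (forall i, 0 < c i) ->
  (forall i x y, dotv (g i x - g i y) (x - y) >= c i * enorm (x - y) ^+ 2) ->
  (forall i, 0 < alpha i) -> \sum_(i < m) alpha i = 1 ->
  (forall i, 0 < beta i) -> 0 < delta ->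
  (forall i, 0 < sigma i /\
     sigma i < Num.sqrt (2 * c i) / (Num.sqrt (2 * c i) + Num.sqrt (beta i))) ->
  (forall w, \sum_(i < m) alpha i * f i zstar <= \sum_(i < m) alpha i * f i w) ->
  let e := fun k i (w : 'rV[R]_n) => g i w - lam k i + beta i *: (w - z k) in
  (forall k i, enorm (e k i (u k.+1 i)) <= sigma i * enorm (e k i (u k i))) ->
  (forall k i, lam k.+1 i = lam k i - beta i *: (u k.+1 i - z k)) ->
  (forall k, z k.+1 =
     (1 + delta)^-1 *:
       ((\sum_(i < m) alpha i * beta i)^-1 *:
          \sum_(i < m) alpha i *: (beta i *: u k.+1 i - lam k.+1 i))
     + (delta / (1 + delta)) *: z k) ->
  forall i : 'I_m,
    (fun k => enorm (e k i (u k.+1 i))) @ \oo --> (0 : R) /\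
    (fun k => enorm (u k i - zstar)) @ \oo --> (0 : R) /\
    (fun k => enorm (lam k i - g i zstar)) @ \oo --> (0 : R) /\
    (fun k => enorm (z k - zstar)) @ \oo --> (0 : R).
Proof.
move=> m_gt0 _ grad _ lip c_gt0 mono alpha_gt0 _ beta_gt0 delta_gt0 sigma_bounds
  zstar_min e inexact lam_update z_update.
have stationary := gradient_eq0_at_min (is_gradient_wsum alpha grad) zstar_min.
have [q q_admissible] := choice (fun i => young_parameter (c_gt0 i) (beta_gt0 i)
  (sigma_bounds i).1 (sigma_bounds i).2).
exact: inexact_admm_cvg m_gt0 lip mono alpha_gt0 beta_gt0 delta_gt0
  (fun i => (sigma_bounds i).1) q_admissible stationary inexact lam_update
  z_update.
Qed.
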